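(* (a) If $Y,Z$ are CFG-spaces contained (as metric subspaces) in a metric space $X$ over a Boolean ring $B$, then $Y\cap Z$ is a CFG-space. (b) If $f:X\to Y$ is a contractive map between CFG-spaces over $B$ and $Z\subseteq Y$ is a CFG-space, then $f^{-1}(Z)$ is a CFG-space.
   Context: $B$ is a Boolean ring ($a\vee b=a+b+ab$, $a\le b\iff ab=a$; $a_1\oplus\cdots\oplus a_n$ denotes a sum of pairwise disjoint elements). A Boolean metric space over $B$: set $X$ with $d:X\times X\to B$, $d(x,y)=0\iff x=y$, symmetric, $d(x,z)\le d(x,y)\vee d(y,z)$; subsets carry the restricted metric. For $x_1,\dots,x_n\in X$, $a_i\in B$ with $a_1\oplus\cdots\oplus a_n=1$, $x$ is a convex combination of the $x_i$ with coefficients $a_i$ if $a_id(x,x_i)=0$ for all $i$. A CFG-space is a space in which all such combinations exist and every element is a convex combination of elements of some fixed finite subset (the empty space counts). A map $f$ is contractive if $d(f(x),f(y))\le d(x,y)$. *)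

From HB Require Import structures.
From mathcomp Require Import all_boot all_order all_algebra.
Set Implicit Arguments. Unset Strict Implicit. Unset Printing Implicit Defensive.
Import GRing.Theory.
Local Open Scope ring_scope.

Definition boolean_ring (B : pzRingType) : Prop := forall a : B, a * a = a.

Definition bjoin (B : pzRingType) (a b : B) : B := a + b + a * b.
Definition ble (B : pzRingType) (a b : B) : Prop := a * b = a.

Definition bmetric (B : pzRingType) (X : Type) (d : X -> X -> B) : Prop :=
  (forall x y, d x y = 0 <-> x = y) /\
  (forall x y, d x y = d y x) /\
  (forall x y z, ble (d x z) (bjoin (d x y) (d y z))).

(* a_1 (+) ... (+) a_n = 1 : pairwise disjoint elements summing to 1
   (for disjoint elements the join equals the ring sum). *)
Definition part_unity (B : pzRingType) (n : nat) (a : 'I_n -> B) : Prop :=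
  (forall i j : 'I_n, i != j -> a i * a j = 0) /\ \sum_(i < n) a i = 1.

Definition convex_comb (B : pzRingType) (X : Type) (d : X -> X -> B)
  (x : X) (n : nat) (xs : 'I_n -> X) (a : 'I_n -> B) : Prop :=
  forall i : 'I_n, a i * d x (xs i) = 0.

Definition CFG (B : pzRingType) (X : Type) (d : X -> X -> B) (Y : X -> Prop) : Prop :=
  (forall x, ~ Y x) \/
  ((forall (n : nat) (xs : 'I_n -> X) (a : 'I_n -> B),
      (forall i, Y (xs i)) -> part_unity a ->
      exists x, Y x /\ convex_comb d x xs a) /\
   (exists (m : nat) (g : 'I_m -> X),
      (forall k, Y (g k)) /\
      forall y, Y y ->
        exists (n : nat) (xs : 'I_n -> X) (a : 'I_n -> B),
          (forall i, exists k, xs i = g k) /\ part_unity a /\ convex_comb d y xs a)).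

Definition contractive (B : pzRingType) (X Y : Type) (dX : X -> X -> B) (dY : Y -> Y -> B)
  (f : X -> Y) : Prop :=
  forall x x', ble (dY (f x) (f x')) (dX x x').

From mathcomp Require Import all_boot all_order all_algebra.
From Stdlib Require Import Classical.
Set Implicit Arguments. Unset Strict Implicit. Unset Printing Implicit Defensive.
Import GRing.Theory.
Local Open Scope ring_scope.

(* In a Boolean metric space, c * d x y = 0 says that "x and y agree on c".
   Agreement is symmetric, transitive and inherited by smaller elements, and
   points agreeing on every block of a partition of unity are equal; hence
   convex combinations are unique, and contractive maps preserve agreement.
   Both parts of the theorem are instances of one statement: for a
   contractive f : X -> Y and CFG-spaces P in X and Z in Y, the set
   P /\ f^-1(Z) is a CFG-space.  Closure under convex combinations follows
   from uniqueness of combinations.  For finite generation, fix a point w of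
   the set; for generators g_k of P and h_l of Z, graft g_k onto w along
   c_kl = 1 - d(f g_k, h_l) (the part where f g_k already sits at h_l); the
   grafted points lie in the set, and a point x with x = sum a_i g_k(i) and
   f x = sum b_j h_l(j) is the combination of the grafted points with the
   product coefficients a_i b_j. *)

Section BooleanRing.
Variable B : pzRingType.
Hypothesis HB : boolean_ring B.

Lemma boolean_addrr (a : B) : a + a = 0.
Proof.
have H := HB (a + a); rewrite mulrDl !mulrDr !HB in H.
have : (a + a) + (a + a) - (a + a) = a + a by rewrite addrK.
by rewrite H subrr.
Qed.

Lemma boolean_mulrC (a b : B) : a * b = b * a.
Proof.
have H := HB (a + b); rewrite mulrDl !mulrDr !HB in H.
have anti : a * b + b * a = 0.
  have : a * b + b * a + (a + b) - (a + b) = (a + b) - (a + b).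
    by congr (_ - _); rewrite -[RHS]H addrACA [a + _]addrC addrA.
  by rewrite addrK subrr.
move/eqP: anti; rewrite addr_eq0 => /eqP ->.
by rewrite -[LHS]addr0 -(boolean_addrr (b * a)) addrA addNr add0r.
Qed.

Lemma boolean_mulrCompl (c : B) : c * (1 - c) = 0.
Proof. by rewrite mulrBr mulr1 HB subrr. Qed.

Lemma boolean_mulComplr (c : B) : (1 - c) * c = 0.
Proof. by rewrite mulrBl mul1r HB subrr. Qed.

Lemma ble_annihilate (c x y : B) : ble x y -> c * y = 0 -> c * x = 0.
Proof. by rewrite /ble => xy cy; rewrite -xy (boolean_mulrC x y) mulrA cy mul0r. Qed.

Lemma bjoin_annihilate (c u v : B) : c * u = 0 -> c * v = 0 -> c * bjoin u v = 0.
Proof. by move=> cu cv; rewrite /bjoin !mulrDr cu cv mulrA cu !mul0r !addr0. Qed.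

Definition two_part (c : B) (i : 'I_2) : B := if i == ord0 then c else 1 - c.

Lemma part_unity_two (c : B) : part_unity (two_part c).
Proof.
split; last by rewrite big_ord_recr big_ord1 /two_part /= addrC subrK.
move=> [[|[|i]] Hi] // [[|[|j]] Hj] //= _.
- exact: boolean_mulrCompl.
- exact: boolean_mulComplr.
Qed.

Definition prod_part (n1 n2 : nat) (a : 'I_n1 -> B) (b : 'I_n2 -> B)
    (k : 'I_#|{: 'I_n1 * 'I_n2}|) : B :=
  a (enum_val k).1 * b (enum_val k).2.

Lemma part_unity_prod (n1 n2 : nat) (a : 'I_n1 -> B) (b : 'I_n2 -> B) :
  part_unity a -> part_unity b -> part_unity (prod_part a b).
Proof.
move=> [a_disj a_sum] [b_disj b_sum]; split.
- move=> i j ij; rewrite /prod_part.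
  have : enum_val i != enum_val j by apply: contra ij => /eqP /enum_val_inj ->.
  case: (enum_val i) => i1 i2; case: (enum_val j) => j1 j2 /= ne.
  have -> : a i1 * b i2 * (a j1 * b j2) = (a i1 * a j1) * (b i2 * b j2).
    by rewrite -!mulrA; congr (_ * _); rewrite !mulrA (boolean_mulrC (b i2)).
  have [e1|ne1] := eqVneq i1 j1.
  + by rewrite b_disj ?mulr0 //; apply: contra ne => /eqP <-; rewrite e1.
  + by rewrite a_disj ?mul0r.
- rewrite /prod_part -(big_enum_val (op := +%R) (A := {: 'I_n1 * 'I_n2})
    (fun s => a s.1 * b s.2)) (eq_bigl predT) //= -(pair_bigA _ (fun i j => a i * b j)) /=.
  under eq_bigr => i _ do rewrite -big_distrr /=.
  by rewrite -big_distrl /= a_sum b_sum mulr1.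
Qed.

Section Agreement.
Variables (X : Type) (d : X -> X -> B).
Hypothesis Hd : bmetric d.

Definition agree (c : B) (x y : X) : Prop := c * d x y = 0.

Lemma agree_sym (c : B) (x y : X) : agree c x y -> agree c y x.
Proof. by case: Hd => _ [dsym _]; rewrite /agree dsym. Qed.

Lemma agree_trans (c : B) (x y z : X) : agree c x y -> agree c y z -> agree c x z.
Proof.
case: Hd => _ [_ dtri] xy yz.
exact: ble_annihilate (dtri x y z) (bjoin_annihilate xy yz).
Qed.

Lemma agree_mull (e c : B) (x y : X) : agree c x y -> agree (e * c) x y.
Proof. by rewrite /agree => cxy; rewrite -mulrA cxy mulr0. Qed.

Lemma agree_mulr (e c : B) (x y : X) : agree c x y -> agree (c * e) x y.
Proof. by rewrite boolean_mulrC; apply: agree_mull. Qed.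

Lemma agree_partition (n : nat) (a : 'I_n -> B) (x y : X) :
  part_unity a -> (forall i, agree (a i) x y) -> x = y.
Proof.
case: Hd => dzero _ [_ a_sum] axy; apply/dzero.
by rewrite -[d x y]mul1r -a_sum mulr_suml big1 // => i _; apply: axy.
Qed.

Lemma agree_compl (c : B) (x y : X) : agree c x y -> agree (1 - c) x y -> x = y.
Proof. by move=> cxy cxy'; apply: (agree_partition (part_unity_two c)) => -[[|[|]]]. Qed.

Lemma convex_comb_unique (n : nat) (xs : 'I_n -> X) (a : 'I_n -> B) (x y : X) :
  part_unity a -> convex_comb d x xs a -> convex_comb d y xs a -> x = y.
Proof.
move=> Ha cx cy; apply: (agree_partition Ha) => i.
exact: agree_trans (cx i) (agree_sym (cy i)).
Qed.

Definition comb_closed (P : X -> Prop) : Prop :=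
  forall (n : nat) (xs : 'I_n -> X) (a : 'I_n -> B),
    (forall i, P (xs i)) -> part_unity a -> exists x, P x /\ convex_comb d x xs a.

Definition fin_generated (P : X -> Prop) : Prop :=
  exists (m : nat) (g : 'I_m -> X), (forall k, P (g k)) /\
    forall y, P y -> exists (n : nat) (xs : 'I_n -> X) (a : 'I_n -> B),
      (forall i, exists k, xs i = g k) /\ part_unity a /\ convex_comb d y xs a.

Lemma comb_closed_glue (P : X -> Prop) (c : B) (p q : X) :
  comb_closed P -> P p -> P q ->
  exists x, P x /\ agree c x p /\ agree (1 - c) x q.
Proof.
move=> clP Pp Pq.
have [||x [Px cx]] := clP 2 (fun i => if i == ord0 then p else q) (two_part c).
- by move=> i; case: ifP.
- exact: part_unity_two.
by exists x; split; [|split; [apply: (cx ord0) | apply: (cx ord_max)]].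
Qed.

Lemma CFG_ext (P Q : X -> Prop) : (forall x, P x <-> Q x) -> CFG d P -> CFG d Q.
Proof.
move=> PQ [Pempty|[clP [m [g [gP genP]]]]].
  by left => x /PQ /Pempty.
right; split.
- move=> n xs a xsQ Ha; have [x [Px cx]] := clP n xs a (fun i => proj2 (PQ _) (xsQ i)) Ha.
  by exists x; split; first exact/PQ.
- exists m, g; split => [k|y /PQ /genP //]; exact/PQ.
Qed.

End Agreement.

Section ContractivePreimage.
Variables (X Y : Type) (dX : X -> X -> B) (dY : Y -> Y -> B) (f : X -> Y).
Hypotheses (HX : bmetric dX) (HY : bmetric dY) (Hf : contractive dX dY f).

Lemma contractive_agree (c : B) (x x' : X) :
  agree dX c x x' -> agree dY c (f x) (f x').
Proof. exact: ble_annihilate (Hf x x'). Qed.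

Variables (P : X -> Prop) (Z : Y -> Prop).

(* Closure: the combination in X is mapped by f to the (unique) combination
   in Z of the images. *)
Lemma comb_closed_preimage_meet :
  comb_closed dX P -> comb_closed dY Z -> comb_closed dX (fun x => P x /\ Z (f x)).
Proof.
move=> clP clZ n xs a xsPZ Ha.
have [x [Px cx]] := clP n xs a (fun i => proj1 (xsPZ i)) Ha.
have [z [Zz cz]] := clZ n (fun i => f (xs i)) a (fun i => proj2 (xsPZ i)) Ha.
have fxz : f x = z.
  by apply: (convex_comb_unique HY Ha) cz => i; apply: contractive_agree.
by exists x; split; first by split; rewrite // fxz.
Qed.

Section Generation.
Hypotheses (clP : comb_closed dX P) (clZ : comb_closed dY Z).
Variable w : X.
Hypotheses (Pw : P w) (Zw : Z (f w)).

Lemma graft_exists (p : X) (q : Y) : P p -> Z q ->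
  exists u, (P u /\ Z (f u)) /\ agree dX (1 - dY (f p) q) u p.
Proof.
move=> Pp Zq; set c := 1 - dY (f p) q.
have [u [Pu [up uw]]] := comb_closed_glue c clP Pp Pw.
have [z [Zz [zq zw]]] := comb_closed_glue c clZ Zq Zw.
have fpq : agree dY c (f p) q by exact: boolean_mulComplr.
have fuz : f u = z.
  apply: (agree_compl (c := c) HY).
  - exact: (agree_trans HY (agree_trans HY (contractive_agree up) fpq) (agree_sym HY zq)).
  - exact: (agree_trans HY (contractive_agree uw) (agree_sym HY zw)).
by exists u; split; first by split; rewrite // fuz.
Qed.

Lemma agree_graft (a b : B) (x p u : X) (q : Y) :
  agree dX a x p -> agree dY b (f x) q -> agree dX (1 - dY (f p) q) u p ->
  agree dX (a * b) x u.
Proof.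
move=> xp fxq up.
have fpq : agree dY (a * b) (f p) q :=
  agree_trans HY (agree_sym HY (contractive_agree (agree_mulr b xp))) (agree_mull a fxq).
have ab_le : a * b * (1 - dY (f p) q) = a * b by rewrite mulrBr mulr1 fpq subr0.
have pu : agree dX (a * b) p u.
  by have := agree_sym HX (agree_mull (a * b) up); rewrite /agree ab_le.
exact: (agree_trans HX (agree_mulr b xp) pu).
Qed.

(* Generation: the points grafted from the pairs of generators of P and Z
   generate P /\ f^-1(Z), with product coefficients. *)
Lemma fin_generated_preimage_meet :
  fin_generated dX P -> fin_generated dY Z -> fin_generated dX (fun x => P x /\ Z (f x)).
Proof.
move=> [m [g [gP genP]]] [l [h [hZ genZ]]].
have [u uspec] := fin_all_exists (fun t : 'I_m * 'I_l => graft_exists (gP t.1) (hZ t.2)).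
exists #|{: 'I_m * 'I_l}|, (fun k => u (enum_val k)); split => [k|x [Px Zfx]].
  exact: (uspec _).1.
have [n1 [xs [a [xs_g [Ha cx]]]]] := genP x Px.
have [n2 [ys [b [ys_h [Hb cfx]]]]] := genZ (f x) Zfx.
have [kk xs_kk] := fin_all_exists xs_g.
have [ll ys_ll] := fin_all_exists ys_h.
exists #|{: 'I_n1 * 'I_n2}|, (fun i => u (kk (enum_val i).1, ll (enum_val i).2)),
  (prod_part a b); split; [|split].
- by move=> i; exists (enum_rank (kk (enum_val i).1, ll (enum_val i).2)); rewrite enum_rankK.
- exact: part_unity_prod.
- move=> i; rewrite /prod_part; case: (enum_val i) => i1 i2 /=.
  apply: (agree_graft (p := g (kk i1)) (q := h (ll i2))).
  + by rewrite -xs_kk; apply: cx.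
  + by rewrite -ys_ll; apply: cfx.
  + exact: (uspec (kk i1, ll i2)).2.
Qed.

End Generation.

Lemma CFG_preimage_meet : CFG dX P -> CFG dY Z -> CFG dX (fun x => P x /\ Z (f x)).
Proof.
move=> CP CZ.
have [[w [Pw Zw]]|empty] := classic (exists w, P w /\ Z (f w)); last first.
  by left => x PZx; apply: empty; exists x.
case: CP => [/(_ w Pw) //|[clP genP]].
case: CZ => [/(_ _ Zw) //|[clZ genZ]].
right; split.
- exact: comb_closed_preimage_meet.
- exact: (fin_generated_preimage_meet clP clZ Pw Zw genP genZ).
Qed.

End ContractivePreimage.
End BooleanRing.

Theorem mainTheorem8 (B : pzRingType) (HB : boolean_ring B) :
  (forall (X : Type) (d : X -> X -> B) (Y Z : X -> Prop),
     bmetric d -> CFG d Y -> CFG d Z -> CFG d (fun x => Y x /\ Z x)) /\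
  (forall (X Y : Type) (dX : X -> X -> B) (dY : Y -> Y -> B) (f : X -> Y) (Z : Y -> Prop),
     bmetric dX -> bmetric dY ->
     CFG dX (fun _ => True) -> CFG dY (fun _ => True) ->
     contractive dX dY f -> CFG dY Z ->
     CFG dX (fun x => Z (f x))).
Proof.
split.
- (* Intersection: the preimage under the identity, which is contractive. *)
  move=> X d Y Z Hd CY CZ.
  have id_contractive : contractive d d id by move=> x x'; rewrite /ble HB.
  exact: (CFG_preimage_meet HB Hd Hd id_contractive CY CZ).
- (* Preimage: intersect with the whole space X. *)
  move=> X Y dX dY f Z HX HY CX _ Hf CZ.
  apply: (CFG_ext (P := fun x => True /\ Z (f x))) => [x|]; first by split=> [[]|].
  exact: (CFG_preimage_meet HB HX HY Hf CX CZ).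
Qed.
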